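(* Let $n,t$ be positive integers. Let $T[l,r)$ be a parallel task and let $T[l_s,r_s)$ with $l\le l_s<r_s\le r$ be a sequential task that is a bucket of $T[l,r)$, assigned to thread $i=\min(\lfloor l_st/n\rfloor,\lfloor rt/n\rfloor-1)$. Then $i\,n/t\le l_s<r_s\le (i+2)n/t$, i.e. the task only contains elements of $A[in/t,\,(i+2)n/t-1]$. Consequently (since sequential subtasks of a sequential task are subintervals of it and are processed by the same thread), all sequential tasks processed by thread $i$ only contain elements from $A[in/t,\,(i+2)n/t-1]$, a range of $O(n/t)$ elements.
   Context: An input array $A[0..n-1]$ is sorted by $t$ threads numbered $0,\dots,t-1$. A task $T[l,r)$ (integers $0\le l<r\le n$) refers to the subarray $A[l..r-1]$. Write $\underline{t}=\lfloor lt/n\rfloor$ and $\overline{t}=\lfloor rt/n\rfloor$. The task is a parallel task if $\overline{t}-\underline{t}>1$, executed by threads $\underline{t},\dots,\overline{t}-1$; otherwise ($\overline{t}-\underline{t}\le 1$) it is a sequential task. A sequential task $T[l_s,r_s)$ arising as a bucket of a parallel task $T[l,r)$ is assigned to thread $\min(\lfloor l_st/n\rfloor,\lfloor rt/n\rfloor-1)$; a sequential task is partitioned by its thread into buckets, which become sequential subtasks of the same thread. *)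

From mathcomp Require Import all_boot.

Definition tidx (n t x : nat) : nat := (x * t) %/ n.

Definition is_task (n l r : nat) : Prop := l < r <= n.

Definition parallel_task (n t l r : nat) : Prop :=
  is_task n l r /\ 1 < tidx n t r - tidx n t l.

Definition sequential_task (n t l r : nat) : Prop :=
  is_task n l r /\ tidx n t r - tidx n t l <= 1.

Definition bucket_thread (n t ls r : nat) : nat :=
  minn (tidx n t ls) (tidx n t r - 1).

From mathcomp Require Import all_boot.
From mathcomp Require Import zify.

(* Write i for the thread of the bucket T[ls,rs).  Since
   tidx x = floor(x t / n) satisfies  tidx x * n <= x t < (tidx x + 1) * n,
   the left end is easy: i <= tidx ls gives  i n <= ls t.  For the right end
   we distinguish the two values of the minimum:
   - i = tidx ls: the bucket is sequential, so tidx rs <= tidx ls + 1 and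
     rs t < (tidx rs + 1) n <= (i + 2) n;
   - i = tidx r - 1: the parent is parallel, so tidx r >= 1, i + 2 = tidx r + 1
     and rs t <= r t < (i + 2) n.
   Finally, a window [i n / t, (i+2) n / t] containing T[ls,rs) contains every
   subinterval of it, which covers the sequential subtasks of the bucket. *)

Lemma tidx_lo n t x : tidx n t x * n <= x * t.
Proof. exact: leq_divM. Qed.

Lemma tidx_hi n t x : 0 < n -> x * t < (tidx n t x).+1 * n.
Proof. exact: ltn_ceil. Qed.

Lemma tidx_mono n t x y : x <= y -> tidx n t x <= tidx n t y.
Proof. by move=> le_xy; rewrite /tidx leq_div2r // leq_mul2r le_xy orbT. Qed.

Lemma sequential_tidx {n t l r} :
  sequential_task n t l r -> tidx n t r <= (tidx n t l).+1.
Proof. by case=> _; lia. Qed.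

Lemma parallel_tidx_pos {n t l r} :
  parallel_task n t l r -> 0 < tidx n t r.
Proof. by case=> _; lia. Qed.

Lemma bucket_thread_lo n t ls r : bucket_thread n t ls r * n <= ls * t.
Proof. exact: leq_trans (leq_mul (geq_minl _ _) (leqnn n)) (tidx_lo _ _ _). Qed.

Lemma bucket_thread_hi {n t ls rs r} :
  0 < n -> rs <= r -> 0 < tidx n t r ->
  tidx n t rs <= (tidx n t ls).+1 ->
  rs * t <= (bucket_thread n t ls r).+2 * n.
Proof.
move=> n_gt0 le_rs_r tr_gt0 adj.
rewrite /bucket_thread /minn; case: ifP => _.
- apply: leq_trans (ltnW (tidx_hi n t rs n_gt0)) _.
  by rewrite leq_mul2r ltnS adj orbT.
- have -> : (tidx n t r - 1).+2 = (tidx n t r).+1 by lia.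
  exact: leq_trans (leq_mul le_rs_r (leqnn t)) (ltnW (tidx_hi n t r n_gt0)).
Qed.

Lemma window_sub {n t a b x y x' y'} :
  a * n <= x * t -> y * t <= b * n -> x <= x' -> y' <= y ->
  a * n <= x' * t /\ y' * t <= b * n.
Proof.
move=> lo hi le_x le_y; split.
- exact: leq_trans lo (leq_mul le_x (leqnn t)).
- exact: leq_trans (leq_mul le_y (leqnn t)) hi.
Qed.

Theorem lemma4p6 (n t l r ls rs : nat) :
  0 < n -> 0 < t ->
  parallel_task n t l r ->
  l <= ls -> ls < rs -> rs <= r ->
  sequential_task n t ls rs ->
  let i := bucket_thread n t ls r in
  [/\ i * n <= ls * t,
      rs * t <= i.+2 * n &
      forall l' r', ls <= l' -> l' < r' -> r' <= rs ->
        i * n <= l' * t /\ r' * t <= i.+2 * n].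
Proof.
move=> n_gt0 _ par _ _ le_rs_r seq i.
have lo : i * n <= ls * t := bucket_thread_lo n t ls r.
have hi : rs * t <= i.+2 * n.
  exact: bucket_thread_hi n_gt0 le_rs_r (parallel_tidx_pos par)
           (sequential_tidx seq).
split=> // l' r' le_l' _ le_r'.
exact: window_sub lo hi le_l' le_r'.
Qed.
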